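(* Let $R$ be a commutative ring, $\delta\in R$, $n\geq 0$. (1) If $x\in X\subseteq\{1,\dots,n\}$ and $n\geq 2$, then $\mathbb 1\otimes_{\mathcal P_n}\mathcal A_{X,x}=0$. (2) If $x\in X\subseteq\{1,\dots,n\}$, then $\mathbb 1\otimes_{\mathcal P_n}\mathcal B_{X,x}=0$. (3) If $Y\subseteq X\subseteq\{1,\dots,n\}$ with $|Y|\geq 2$, then $\mathbb 1\otimes_{\mathcal P_n}\mathcal M_{X,Y}=0$, and $\mathcal M_{X,Y}$ is a direct summand of the left $\mathcal P_n$-module $\mathcal P_n/J_{X-Y}$.
   Context: $\mathcal P_n=\mathcal P_n(R,\delta)$ is the partition algebra: the free $R$-module on set partitions (''diagrams'') of $\{-n,\dots,-1,1,\dots,n\}$ (negative = left nodes, positive = right nodes), with product given by stacking (identifying right nodes of the first diagram with left nodes of the second), taking the induced partition on outer nodes, and multiplying by $\delta$ for each component consisting only of middle nodes. The trivial right module $\mathbb 1$ is $R$ with permutation diagrams (all blocks of the form $\{-i,j\}$) acting as the identity and other diagrams as $0$. For $Z\subseteq\{1,\dots,n\}$, $J_Z$ is the left ideal spanned by diagrams in which among the right nodes labelled by $Z$ there is a singleton block or two distinct nodes in the same block. For $Y\subseteq X\subseteq\{1,\dots,n\}$ and $x\in X$, define left submodules of $\mathcal P_n$: $A_x$ spanned by diagrams in which the right node $x$ is a singleton; $B_{X,x}$ spanned by diagrams in which $x$ lies in the same block as some other element of $X$; $M_Y$ spanned by diagrams in which all right nodes in $Y$ lie in one block. Set $\mathcal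 A_{X,x}=A_x/(A_x\cap J_{X-\{x\}})$, $\mathcal B_{X,x}=B_{X,x}/(B_{X,x}\cap J_{X-\{x\}})$, $\mathcal M_{X,Y}=M_Y/(M_Y\cap J_{X-Y})$; in particular $\mathcal M_{X,Y}$ is a submodule of $\mathcal P_n/J_{X-Y}$. *)

From HB Require Import structures.
From mathcomp Require Import all_boot all_order all_algebra.
Set Implicit Arguments.
Unset Strict Implicit.
Unset Printing Implicit Defensive.
Import GRing.Theory.
Local Open Scope ring_scope.

Section PartitionAlgebra.
Variable n : nat.

(* Nodes: (false, i) is the left node -(i+1), (true, i) the right node i+1. *)
Definition node := (bool * 'I_n)%type.

Definition diagram := {P : {set {set node}} | partition P [set: node]}.

Definition same_block (d : {set {set node}}) (a b : node) : bool :=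
  [exists B in d, (a \in B) && (b \in B)].

(* Stacking d1 on top of d2: nodes of the three layers.
   inl a = an outer node (left nodes of d1 / right nodes of d2),
   inr i = the i-th middle node (right of d1 = left of d2). *)
Definition mnode := (node + 'I_n)%type.
Definition emb1 (a : node) : mnode := if a.1 then inr a.2 else inl a.
Definition emb2 (a : node) : mnode := if a.1 then inl a else inr a.2.
Definition is_mid (u : mnode) : bool := if u is inr _ then true else false.

Definition comp_edge (d1 d2 : diagram) : rel mnode := fun u v =>
  [exists a, exists b, [&& u == emb1 a, v == emb1 b & same_block (val d1) a b]]
  || [exists a, exists b, [&& u == emb2 a, v == emb2 b & same_block (val d2) a b]].

Definition conn (d1 d2 : diagram) : rel mnode := connect (comp_edge d1 d2).

Definition comp_set (d1 d2 : diagram) : {set {set node}} :=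
  equivalence_partition (fun a b => conn d1 d2 (inl a) (inl b)) [set: node].

(* comp_set is always a partition; insubd only serves to land in the subtype *)
Definition comp (d1 d2 : diagram) : diagram := insubd d1 (comp_set d1 d2).

Definition nmid (d1 d2 : diagram) : nat :=
  #|[set B in equivalence_partition (conn d1 d2) [set: mnode]
       | B \subset [set u | is_mid u]]|.

Variable R : comPzRingType.
Variable delta : R.

(* P_n as an R-module: the free R-module on diagrams *)
Local Notation Pn := {ffun diagram -> R}.

Definition scl (r : R) (m : Pn) : Pn := [ffun d => r * m d].

Definition dact (d : diagram) (m : Pn) : Pn :=
  [ffun d' => \sum_(d2 | comp d d2 == d') delta ^+ (nmid d d2) * m d2].

Definition is_perm_diagram (d : diagram) : bool :=
  [forall B in val d, exists i, exists j, B == [set (false, i); (true, j)]].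

(* the trivial right module 1 : diagrams act by eps *)
Definition eps (d : diagram) : R := if is_perm_diagram d then 1 else 0.

(* the R-span of the diagrams satisfying p *)
Definition dspan (p : pred diagram) (m : Pn) : Prop :=
  forall d, m d != 0 -> p d.

(* 1 (x)_{P_n} (N / L) = 0, for left submodules L <= N of P_n, i.e.
   N = span{ d*m - eps(d) m : d diagram, m in N } + L. *)
Definition triv_tensor_vanishes (N L : Pn -> Prop) : Prop :=
  forall m, N m ->
    exists s : seq (diagram * Pn),
      (forall x, x \in s -> N x.2) /\
      exists j, L j /\
        m = \sum_(x <- s) (dact x.1 x.2 - scl (eps x.1) x.2) + j.

Definition left_submodule (C : Pn -> Prop) : Prop :=
  C 0 /\ (forall u v, C u -> C v -> C (u + v)) /\
  (forall (r : R) v, C v -> C (scl r v)) /\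
  (forall d v, C v -> C (dact d v)).

(* The image (N + L)/L of N in P_n / L is a direct summand of the left
   P_n-module P_n / L: by the correspondence theorem, there is a left
   submodule C of P_n with L <= C, N + C = P_n and N cap C <= L
   (so (N+L)/L (+) C/L = P_n/L). *)
Definition quot_direct_summand (N L : Pn -> Prop) : Prop :=
  exists C : Pn -> Prop,
    left_submodule C /\ (forall v, L v -> C v) /\
    (forall v, exists a c, N a /\ C c /\ v = a + c) /\
    (forall v, N v -> C v -> L v).
End PartitionAlgebra.

Arguments dspan {n R}.

Definition pJ {n} (Z : {set 'I_n}) : pred (diagram n) := fun d =>
  [exists z in Z, [set ((true, z) : node n)] \in val d]
  || [exists z1 in Z, exists z2 in Z,
        (z1 != z2) && same_block (val d) (true, z1) (true, z2)].

Definition pA {n} (x : 'I_n) : pred (diagram n) := fun d =>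
  [set ((true, x) : node n)] \in val d.

Definition pB {n} (X : {set 'I_n}) (x : 'I_n) : pred (diagram n) := fun d =>
  [exists y in X, (y != x) && same_block (val d) (true, x) (true, y)].

Definition pM {n} (Y : {set 'I_n}) : pred (diagram n) := fun d =>
  [forall y1 in Y, forall y2 in Y, same_block (val d) (true, y1) (true, y2)].

(* For (1), (2) and the first half of (3) already 1 (x) N = 0, where N is the
   submodule spanned by the diagrams in question: every such diagram d is not a
   permutation diagram and has a right unit e in N, i.e. d e = d with no closed
   loop, so 1 (x) d = 1 (x) d e = eps(d) (x) e = 0.  For M_Y and B_{X,x} the right
   unit is the identity diagram with all nodes labelled in Y (resp. {x, y}, y a
   partner of x) fused into one block.  For A_x it is the identity diagram with
   the right node x cut off and the left node x glued to the block of some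
   y <> x; without that glueing the middle node x would close a loop, whence
   n >= 2.
   For the direct summand, v |-> v E_Y (E_Y the fusing diagram) is an idempotent
   endomorphism of the left module P_n with image M_Y which preserves J_{X-Y},
   since X - Y is disjoint from Y; its preimage of J_{X-Y} is the complement. *)

From mathcomp Require Import all_boot all_order all_algebra.
Set Implicit Arguments.
Unset Strict Implicit.
Unset Printing Implicit Defensive.
Import GRing.Theory.

Section FinRel.
Variable T : finType.
Implicit Types (e r : rel T) (t : pred T).

Lemma connect_eq_rel e r : reflexive r -> transitive r ->
  subrel e r -> subrel r (connect e) -> connect e =2 r.
Proof.
move=> r_refl r_trans er re u v; apply/idP/idP; last exact: re.
case/connectP=> p + ->{v}; elim: p u => [|w p IHp] u /=; first by rewrite r_refl.
by case/andP=> /er ruw /IHp; apply: r_trans.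
Qed.

Lemma connect_isolated e u : (forall v, e u v -> v = u) ->
  forall v, connect e u v -> v = u.
Proof.
move=> isol v /connectP[p + ->{v}]; elim: p => [|w p IHp] //= /andP[/isol ->].
exact: IHp.
Qed.

Lemma equivalence_rel_connect e : symmetric e -> equivalence_rel (connect e).
Proof.
move=> e_sym x y z; split=> [|xy]; first exact: connect0.
apply/idP/idP; last exact: connect_trans.
by apply: connect_trans; rewrite (sym_connect_sym e_sym).
Qed.

Lemma equivalence_partitionT r : equivalence_rel r ->
  partition (equivalence_partition r [set: T]) [set: T].
Proof. by move=> r_eq; apply: equivalence_partitionP => x y z _ _ _; apply: r_eq. Qed.

Definition glue r t : rel T := fun a b => r a b || t a && t b.

Lemma glue_refl r t : reflexive r -> reflexive (glue r t).
Proof. by move=> r_refl a; rewrite /glue r_refl. Qed.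

Lemma glue_trans r t : transitive r -> (forall a b, r a b -> t a = t b) ->
  transitive (glue r t).
Proof.
move=> r_trans t_r b a c; rewrite /glue.
case/orP=> [ab|/andP[ta tb]] /orP[bc|/andP[tb' tc]].
- by rewrite (r_trans _ _ _ ab bc).
- by rewrite (t_r _ _ ab) tb' tc orbT.
- by rewrite ta -(t_r _ _ bc) tb orbT.
- by rewrite ta tc orbT.
Qed.

Lemma glue_classes_sub r r' t (A : {set T}) : r' =2 glue r t ->
  (forall x, t x -> exists2 y, r x y & y \notin A) ->
  [set B in equivalence_partition r' [set: T] | B \subset A] =
  [set B in equivalence_partition r [set: T] | B \subset A].
Proof.
move=> r'E leaves.
have r_r' : subrel r r' by move=> x y xy; rewrite r'E /glue xy.
have not_sub x r1 : t x -> subrel r r1 -> ~~ ([set y in [set: T] | r1 x y] \subset A).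
  case/leaves=> y xy yA rr1; apply: contra yA => /subsetP; apply.
  by rewrite !inE (rr1 _ _ xy).
have same_class x : ~~ t x -> [set y in [set: T] | r' x y] = [set y in [set: T] | r x y].
  by move/negbTE=> tx; apply/setP=> y; rewrite !inE r'E /glue tx orbF.
apply/setP=> B; rewrite !inE; apply/idP/idP => /andP[/imsetP[x _ ->] sub];
  have [tx | /same_class class_x] := boolP (t x).
- by rewrite (negbTE (not_sub x r' tx r_r')) in sub.
- by rewrite class_x imset_f ?inE // -class_x.
- by rewrite (negbTE (not_sub x r tx (fun _ _ => id))) in sub.
- by rewrite -class_x imset_f ?inE // class_x.
Qed.

End FinRel.

Section SameBlock.
Variable n : nat.
Local Notation T := (node n).
Implicit Types (P Q : {set {set T}}) (a b c : T).

Lemma same_block_sym P : symmetric (same_block P).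
Proof.
by move=> a b; apply/existsP/existsP=> -[B /and3P[PB aB bB]]; exists B; rewrite PB aB bB.
Qed.

Section Partition.
Variable P : {set {set T}}.
Hypothesis partP : partition P [set: T].

Lemma same_blockE a b : same_block P a b = (b \in pblock P a).
Proof.
have /and3P[/eqP covP tiP _] := partP.
apply/existsP/idP => [[B /and3P[PB aB bB]]|bPa]; first by rewrite (def_pblock tiP PB aB).
by exists (pblock P a); rewrite bPa pblock_mem ?mem_pblock covP inE.
Qed.

Lemma same_block_refl : reflexive (same_block P).
Proof. by move=> a; rewrite same_blockE mem_pblock (cover_partition partP) inE. Qed.

Lemma same_block_trans a b c :
  same_block P a b -> same_block P b c -> same_block P a c.
Proof.
have /and3P[_ tiP _] := partP.
by rewrite !same_blockE => ab; rewrite (same_pblock tiP ab).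
Qed.

Lemma set1_blockE a : ([set a] \in P) = [forall b, same_block P a b ==> (b == a)].
Proof.
have aP : a \in cover P by rewrite (cover_partition partP) inE.
have /and3P[_ tiP _] := partP.
apply/idP/forallP => [Pa b|isol].
  by apply/implyP; rewrite same_blockE (def_pblock tiP Pa) ?inE ?set11.
suff -> : [set a] = pblock P a by rewrite pblock_mem.
apply/setP=> b; rewrite inE; apply/eqP/idP => [->|]; first by rewrite mem_pblock.
by rewrite -same_blockE => /(implyP (isol b))/eqP.
Qed.

End Partition.

Lemma partition_ext P Q : partition P [set: T] -> partition Q [set: T] ->
  same_block P =2 same_block Q -> P = Q.
Proof.
move=> partP partQ PQ.
rewrite -(equivalence_partition_pblock partP) -(equivalence_partition_pblock partQ).
by apply: eq_imset => a; apply/setP=> b; rewrite !inE -!same_blockE ?PQ.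
Qed.

Lemma same_block_equivalence_partition (r : rel T) : equivalence_rel r ->
  same_block (equivalence_partition r [set: T]) =2 r.
Proof.
move=> r_eq a b; rewrite same_blockE; last exact: equivalence_partitionT.
by apply: pblock_equivalence_partition; rewrite ?inE // => x y z _ _ _; apply: r_eq.
Qed.

End SameBlock.

Section Diagrams.
Variable n : nat.
Implicit Types (d e : diagram n) (a b : node n) (u v : mnode n).

Lemma diagram_partition d : partition (val d) [set: node n].
Proof. exact: (valP d). Qed.

Lemma diagram_ext d e : same_block (val d) =2 same_block (val e) -> d = e.
Proof. by move=> de; apply: val_inj; apply: partition_ext de; apply: diagram_partition. Qed.

Lemma same_block_refl_diagram d : reflexive (same_block (val d)).
Proof. exact: same_block_refl (diagram_partition d). Qed.

Lemma same_block_trans_diagram d a b c : same_block (val d) a b ->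
  same_block (val d) b c -> same_block (val d) a c.
Proof. exact: (same_block_trans (diagram_partition d)). Qed.

Lemma set1_blockP d a :
  reflect (forall b, same_block (val d) a b -> b = a) ([set a] \in val d).
Proof.
rewrite set1_blockE; last exact: diagram_partition.
by apply: (iffP forallP) => isol b; [move/(implyP (isol b))/eqP | apply/implyP => /isol ->].
Qed.

Lemma comp_edge_sym d1 d2 : symmetric (comp_edge d1 d2).
Proof.
move=> u v; congr (_ || _); apply/existsP/existsP => -[a /existsP[b /and3P[ua vb ab]]];
by exists b; apply/existsP; exists a; rewrite ua vb same_block_sym.
Qed.

Lemma conn_equiv d1 d2 : equivalence_rel (conn d1 d2).
Proof. exact: equivalence_rel_connect (@comp_edge_sym d1 d2). Qed.

Lemma conn_refl d1 d2 : reflexive (conn d1 d2).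
Proof. exact: connect0. Qed.

Lemma conn_sym d1 d2 : symmetric (conn d1 d2).
Proof. exact: sym_connect_sym (@comp_edge_sym d1 d2). Qed.

Lemma conn_trans d1 d2 u v w : conn d1 d2 u v -> conn d1 d2 v w -> conn d1 d2 u w.
Proof. exact: connect_trans. Qed.

Lemma conn_emb1 d1 d2 a b : same_block (val d1) a b -> conn d1 d2 (emb1 a) (emb1 b).
Proof.
by move=> ab; apply/connect1/orP; left; apply/existsP; exists a; apply/existsP; exists b;
  rewrite !eqxx.
Qed.

Lemma conn_emb2 d1 d2 a b : same_block (val d2) a b -> conn d1 d2 (emb2 a) (emb2 b).
Proof.
by move=> ab; apply/connect1/orP; right; apply/existsP; exists a; apply/existsP; exists b;
  rewrite !eqxx.
Qed.

Lemma comp_edge_cases d1 d2 (r : mnode n -> mnode n -> Prop) :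
  (forall a b, same_block (val d1) a b -> r (emb1 a) (emb1 b)) ->
  (forall a b, same_block (val d2) a b -> r (emb2 a) (emb2 b)) ->
  forall u v, comp_edge d1 d2 u v -> r u v.
Proof.
move=> r1 r2 u v.
by case/orP=> /existsP[a /existsP[b /and3P[/eqP-> /eqP-> ab]]]; [apply: r1 | apply: r2].
Qed.

Lemma same_block_comp d1 d2 a b :
  same_block (val (comp d1 d2)) a b = conn d1 d2 (inl a) (inl b).
Proof.
have outer_equiv : equivalence_rel (fun a b => conn d1 d2 (inl a) (inl b)).
  by move=> x y z; apply: conn_equiv.
rewrite /comp insubdK /comp_set; last exact: equivalence_partitionT outer_equiv.
exact: (same_block_equivalence_partition outer_equiv).
Qed.

Lemma nmid_eq0 d1 d2 : (forall i, exists a, conn d1 d2 (inr i) (inl a)) ->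
  nmid d1 d2 = 0%N.
Proof.
move=> outer; apply/eqP; rewrite cards_eq0; apply/eqP/setP => B; rewrite !inE.
apply/negbTE/negP => /andP[/imsetP[u _ ->] /subsetP mid].
have [w uw not_mid] : exists2 w, conn d1 d2 u w & ~~ is_mid w.
  case: u {mid} => [a|i]; first by exists (inl a); rewrite ?conn_refl.
  by have [a ia] := outer i; exists (inl a).
by move: (mid w); rewrite !inE uw (negbTE not_mid) => /(_ isT).
Qed.

Definition key_diagram (K : eqType) (k : node n -> K) : diagram n :=
  exist (fun P => partition P [set: node n]) _ (preim_partitionP k [set: node n]).

Lemma same_block_key_diagram (K : eqType) (k : node n -> K) a b :
  same_block (val (key_diagram k)) a b = (k a == k b).
Proof. by apply: same_block_equivalence_partition; split=> // /eqP->. Qed.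

Definition unemb1 u : node n := match u with inl a => a | inr i => (true, i) end.

Lemma unemb1K : cancel (@emb1 n) unemb1.
Proof. by case=> -[] i. Qed.

Lemma unemb1_emb2 a : unemb1 (emb2 a) = (true, a.2).
Proof. by case: a => -[] i. Qed.

Lemma conn_emb1_unemb1 d1 d2 u :
  (forall j, same_block (val d2) (true, j) (false, j)) -> conn d1 d2 u (emb1 (unemb1 u)).
Proof.
move=> vertical; case: u => [[[] j]|i] /=; try exact: conn_refl.
exact: (conn_emb2 d1 (vertical j)).
Qed.

Lemma pM_set2 d y z : same_block (val d) (true, y) (true, z) -> pM [set y; z] d.
Proof.
move=> yz; apply/forall_inP=> y1 /set2P[]-> ; apply/forall_inP=> z1 /set2P[]->;
  by rewrite ?same_block_refl_diagram // same_block_sym.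
Qed.

Definition right_unit d e := (comp d e == d) && (nmid d e == 0%N).

End Diagrams.

Section Merge.
Variables (n : nat) (S : {set 'I_n}).
Implicit Types (d : diagram n) (a b : node n) (u v : mnode n).

Definition merge : diagram n :=
  key_diagram (fun a : node n => if a.2 \in S then None else Some a.2).

Lemma same_block_merge a b :
  same_block (val merge) a b = (a.2 == b.2) || (a.2 \in S) && (b.2 \in S).
Proof.
rewrite same_block_key_diagram; have [-> | ab] := eqVneq a.2 b.2; first by rewrite !eqxx.
by case: ifP => aS; case: ifP => bS //=; apply/negbTE.
Qed.

Lemma pM_merge : pM S merge.
Proof.
by apply/forall_inP=> y yS; apply/forall_inP=> z zS; rewrite same_block_merge yS zS orbT.
Qed.

Definition meets d a := [exists s in S, same_block (val d) a (true, s)].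

Lemma meets_same_block d a b : same_block (val d) a b -> meets d a = meets d b.
Proof.
move=> ab; apply/exists_inP/exists_inP=> -[s sS hs]; exists s => //.
  by apply: same_block_trans_diagram hs; rewrite same_block_sym.
exact: same_block_trans_diagram hs.
Qed.

Lemma conn_merge d : conn d merge =2
  glue (fun u v => same_block (val d) (unemb1 u) (unemb1 v)) (fun u => meets d (unemb1 u)).
Proof.
apply: connect_eq_rel.
- by apply: glue_refl => u; apply: same_block_refl_diagram.
- apply: glue_trans => [v u w|u v]; first exact: same_block_trans_diagram.
  exact: meets_same_block.
- apply: comp_edge_cases => a b; first by rewrite /glue !unemb1K => ->.
  rewrite same_block_merge /glue !unemb1_emb2 => /orP[/eqP-> | /andP[aS bS]].
    by rewrite same_block_refl_diagram.
  by rewrite /meets; apply/orP; right; apply/andP; split; apply/exists_inP;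
    [exists a.2 | exists b.2]; rewrite ?same_block_refl_diagram.
- have vertical j : same_block (val merge) (true, j) (false, j) by rewrite same_block_merge eqxx.
  move=> u v uv; apply: conn_trans (conn_emb1_unemb1 d u vertical) _.
  rewrite conn_sym; apply: conn_trans (conn_emb1_unemb1 d v vertical) _; rewrite conn_sym.
  case/orP: uv => [uv|/andP[/exists_inP[s sS us] /exists_inP[t tS vt]]].
    exact: conn_emb1.
  apply: conn_trans (conn_emb1 _ us) _; rewrite conn_sym.
  apply: conn_trans (conn_emb1 _ vt) _; rewrite conn_sym.
  by apply: (@conn_emb2 _ d merge (false, s) (false, t)); rewrite same_block_merge sS tS orbT.
Qed.

Lemma same_block_comp_merge d a b : same_block (val (comp d merge)) a b =
  same_block (val d) a b || meets d a && meets d b.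
Proof. by rewrite same_block_comp conn_merge. Qed.

Lemma pM_comp_merge d : pM S (comp d merge).
Proof.
apply/forall_inP=> y yS; apply/forall_inP=> z zS; rewrite same_block_comp_merge.
by apply/orP; right; apply/andP; split; apply/exists_inP;
  [exists y | exists z]; rewrite ?same_block_refl_diagram.
Qed.

Lemma comp_merge_id d : pM S d -> comp d merge = d.
Proof.
move/forall_inP=> dS; apply: diagram_ext => a b; rewrite same_block_comp_merge.
apply/orP/idP => [[//|/andP[/exists_inP[s sS a_s] /exists_inP[t tS bt]]] | ->]; last by left.
apply: same_block_trans_diagram a_s _; rewrite same_block_sym.
apply: same_block_trans_diagram bt _.
by move/forall_inP: (dS t tS); apply.
Qed.

Lemma nmid_merge d : nmid d merge = 0%N.
Proof.
apply: nmid_eq0 => i; exists (true, i).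
by rewrite conn_merge /glue /= same_block_refl_diagram.
Qed.

Lemma right_unit_merge d : pM S d -> right_unit d merge.
Proof. by move=> dS; rewrite /right_unit comp_merge_id // nmid_merge !eqxx. Qed.

End Merge.

Section Detach.
Variables (n : nat) (x y : 'I_n).
Hypothesis xy : x != y.
Implicit Types (d : diagram n) (a b : node n) (u v : mnode n).

Definition retarget i := if i == x then y else i.

Lemma retarget_neq i : retarget i != x.
Proof. by rewrite /retarget; case: ifP => [_|/negbT//]; rewrite eq_sym. Qed.

Definition detach : diagram n :=
  key_diagram (fun a => if a == (true, x) then None else Some (retarget a.2)).

Lemma same_block_detach a b : a != (true, x) ->
  same_block (val detach) a b = (b != (true, x)) && (retarget a.2 == retarget b.2).
Proof. by rewrite same_block_key_diagram => /negbTE->; case: ifP. Qed.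

Lemma pA_detach : pA x detach.
Proof.
apply/set1_blockP => b; rewrite same_block_sym.
by have [//|bx] := eqVneq b (true, x); rewrite same_block_detach ?eqxx.
Qed.

Definition pull u : node n := if u is inr i then (true, retarget i) else unemb1 u.

Lemma retarget_id i : (true, i) != (true, x) -> retarget i = i.
Proof. by move=> ix; rewrite /retarget ifN //; apply: contraNneq ix => ->. Qed.

Lemma pull_emb1 a : a != (true, x) -> pull (emb1 a) = a.
Proof. by case: a => -[] i //= /retarget_id ->. Qed.

Lemma pull_emb2 a : a != (true, x) -> pull (emb2 a) = (true, retarget a.2).
Proof. by case: a => -[] i //= /retarget_id ->. Qed.

Lemma pull_eq_x u : pull u = (true, x) -> u = inl (true, x).
Proof. by case: u => [a /= -> // | i [] /eqP]; rewrite (negbTE (retarget_neq i)). Qed.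

Lemma conn_emb1_pull d u : u != inl (true, x) -> conn d detach u (emb1 (pull u)).
Proof.
case: u => [[[] j] | i] /= ux.
- apply: (@conn_emb2 _ d detach (true, j) (false, j)).
  by rewrite same_block_detach //= ?eqxx //; apply: contraNneq ux => ->.
- exact: conn_refl.
- rewrite /retarget; case: eqP => [-> | _]; last exact: conn_refl.
  apply: (@conn_emb2 _ d detach (false, x) (false, y)).
  by rewrite same_block_detach //= /retarget eqxx if_same.
Qed.

Section RightUnit.
Variable d : diagram n.
Hypothesis dx : pA x d.

Lemma conn_detach : conn d detach =2 (fun u v => same_block (val d) (pull u) (pull v)).
Proof.
have /set1_blockP isol := dx.
apply: connect_eq_rel.
- by move=> u; apply: same_block_refl_diagram.
- by move=> v u w; apply: same_block_trans_diagram.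
- apply: comp_edge_cases => a b.
    have [-> /isol -> | ax] := eqVneq a (true, x); first exact: same_block_refl_diagram.
    have [-> | bx ab] := eqVneq b (true, x).
      by rewrite same_block_sym => /isol ax'; rewrite ax' eqxx in ax.
    by rewrite !pull_emb1.
  have [-> | ax] := eqVneq a (true, x).
    by move/(set1_blockP _ _ pA_detach)->; apply: same_block_refl_diagram.
  rewrite same_block_detach // => /andP[bx /eqP ab].
  by rewrite !pull_emb2 // ab same_block_refl_diagram.
- move=> u v uv; have [ux | ux] := eqVneq u (inl (true, x)).
    by move: uv; rewrite ux => /isol/pull_eq_x->; apply: conn_refl.
  have [vx | vx] := eqVneq v (inl (true, x)).
    by move: uv; rewrite vx same_block_sym => /isol/pull_eq_x ux'; rewrite ux' eqxx in ux.
  apply: conn_trans (conn_emb1_pull d ux) _; rewrite conn_sym.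
  by apply: conn_trans (conn_emb1_pull d vx) _; rewrite conn_sym; apply: conn_emb1.
Qed.

Lemma right_unit_detach : right_unit d detach.
Proof.
rewrite /right_unit; apply/andP; split; apply/eqP.
  by apply: diagram_ext => a b; rewrite same_block_comp conn_detach.
by apply: nmid_eq0 => i; exists (true, retarget i); rewrite conn_detach same_block_refl_diagram.
Qed.

End RightUnit.
End Detach.

Section NotPermutation.
Variables (n : nat) (R : comPzRingType).
Implicit Types (d : diagram n).

Lemma eps_pA d x : pA x d -> eps R d = 0%R.
Proof.
move=> dx; rewrite /eps ifN //; apply/negP => /forall_inP /(_ _ dx) /existsP[i /existsP[j /eqP ij]].
by move/setP/(_ (false, i)): ij; rewrite !inE eqxx.
Qed.

Lemma eps_same_block_right d z1 z2 :
  z1 != z2 -> same_block (val d) (true, z1) (true, z2) -> eps R d = 0%R.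
Proof.
move=> z12 /existsP[B /and3P[dB z1B z2B]]; rewrite /eps ifN //.
apply/negP => /forall_inP /(_ _ dB) /existsP[i /existsP[j /eqP Bij]].
by move: z1B z2B z12; rewrite Bij !inE /= => /eqP[->] /eqP[->]; rewrite eqxx.
Qed.

End NotPermutation.

Section LeftMultiplication.
Variable n : nat.
Implicit Types (d : diagram n) (a b : node n) (u v : mnode n).

Lemma pJ_comp Z d0 d : pJ Z d -> pJ Z (comp d0 d).
Proof.
case/orP=> [/exists_inP[z zZ /set1_blockP isol]
           | /exists_inP[z1 z1Z /exists_inP[z2 z2Z /andP[z12 d12]]]].
  apply/orP; left; apply/exists_inP; exists z => //; apply/set1_blockP => b.
  have edge : forall u v, comp_edge d0 d u v -> u = inl (true, z) -> v = u.
    apply: (comp_edge_cases (r := fun u v => u = inl (true, z) -> v = u)) => -[[] i] b' ab //= [ei].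
    by move: ab; rewrite ei => /isol->.
  rewrite same_block_comp => zb.
  suff [] : inl b = inl (true, z) :> mnode n by [].
  by apply: connect_isolated zb => v /edge; apply.
by apply/orP; right; apply/exists_inP; exists z1 => //; apply/exists_inP; exists z2;
  rewrite // z12 same_block_comp (conn_emb2 d0 d12).
Qed.

Section MergeCompatibility.
Variable Y : {set 'I_n}.

Lemma pJ_comp_merge (Z : {set 'I_n}) d :
  [disjoint Z & Y] -> pJ Z d -> pJ Z (comp d (merge Y)).
Proof.
move=> ZY; case/orP=> [/exists_inP[z zZ /set1_blockP isol]
                     | /exists_inP[z1 z1Z /exists_inP[z2 z2Z /andP[z12 d12]]]].
  apply/orP; left; apply/exists_inP; exists z => //; apply/set1_blockP => b.
  rewrite same_block_comp_merge => /orP[/isol // | /andP[/exists_inP[s sY /isol[sz]] _]].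
  by move: (disjointFr ZY zZ); rewrite -sz sY.
by apply/orP; right; apply/exists_inP; exists z1 => //; apply/exists_inP; exists z2;
  rewrite // z12 same_block_comp_merge d12.
Qed.

Variables d0 d : diagram n.

Definition reaches u := [exists s in Y, conn d0 d u (inl (true, s))].

Lemma reaches_conn u v : conn d0 d u v -> reaches u = reaches v.
Proof.
move=> uv; apply/exists_inP/exists_inP => -[s sY hs]; exists s => //.
  by apply: conn_trans hs; rewrite conn_sym.
exact: conn_trans hs.
Qed.

Lemma conn_comp_merge : conn d0 (comp d (merge Y)) =2 glue (conn d0 d) reaches.
Proof.
have conn_sub : subrel (conn d0 d) (conn d0 (comp d (merge Y))).
  apply: connect_sub; apply: comp_edge_cases => a b ab; first exact: conn_emb1.
  by apply: conn_emb2; rewrite same_block_comp_merge ab.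
apply: connect_eq_rel.
- exact/glue_refl/conn_refl.
- by apply: glue_trans => [v u w | u v]; [apply: conn_trans | apply: reaches_conn].
- apply: comp_edge_cases => a b ab; first by rewrite /glue (conn_emb1 d ab).
  rewrite same_block_comp_merge /glue in ab *.
  case/orP: ab => [ab | /andP[/exists_inP[s sY a_s] /exists_inP[t tY bt]]].
    by rewrite (conn_emb2 d0 ab).
  by apply/orP; right; apply/andP; split; apply/exists_inP; [exists s | exists t];
    rewrite // (conn_emb2 d0 a_s, conn_emb2 d0 bt).
- move=> u v /orP[/conn_sub // | /andP[/exists_inP[s sY us] /exists_inP[t tY vt]]].
  apply: conn_trans (conn_sub _ _ us) _; rewrite conn_sym.
  apply: conn_trans (conn_sub _ _ vt) _; rewrite conn_sym.
  apply: (@conn_emb2 _ d0 _ (true, s) (true, t)); rewrite same_block_comp_merge.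
  by apply/orP; right; apply/andP; split; apply/exists_inP; [exists s | exists t];
    rewrite // same_block_refl_diagram.
Qed.

Lemma comp_comp_merge : comp d0 (comp d (merge Y)) = comp (comp d0 d) (merge Y).
Proof.
apply: diagram_ext => a b; rewrite same_block_comp conn_comp_merge same_block_comp_merge.
rewrite /glue -same_block_comp.
by congr (_ || _ && _); apply: eq_existsb => s; rewrite same_block_comp.
Qed.

Lemma nmid_comp_merge : nmid d0 (comp d (merge Y)) = nmid d0 d.
Proof.
rewrite [LHS]/nmid (glue_classes_sub (A := [set u | is_mid u]) conn_comp_merge) //.
move=> u /exists_inP[s _ us].
by exists (inl (true, s)); rewrite ?inE.
Qed.

End MergeCompatibility.
End LeftMultiplication.

Section Algebra.
Variables (n : nat) (R : comPzRingType) (delta : R).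
Local Open Scope ring_scope.
Local Notation Pn := {ffun diagram n -> R}.
Implicit Types (d e : diagram n) (p q : pred (diagram n)) (u v : Pn).

Definition basis_vec e : Pn := [ffun d => (d == e)%:R].

Lemma scl0 v : scl 0 v = 0.
Proof. by apply/ffunP => d; rewrite !ffunE mul0r. Qed.

Lemma exists_nz_summand (P : pred (diagram n)) (F : diagram n -> R) :
  \sum_(d | P d) F d != 0 -> exists2 d, P d & F d != 0.
Proof.
move=> nz; have [d /andP[Pd Fd] | none] := pickP (fun d => P d && (F d != 0)); first by exists d.
by rewrite big1 ?eqxx // in nz => d Pd; move: (none d); rewrite Pd => /negbFE/eqP.
Qed.

Lemma dspan0 p : dspan p (0 : Pn).
Proof. by move=> d; rewrite ffunE eqxx. Qed.

Lemma dspanD p u v : dspan p u -> dspan p v -> dspan p (u + v).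
Proof.
move=> pu pv d; rewrite ffunE; have [u0 | /pu //] := eqVneq (u d) 0.
by rewrite u0 add0r => /pv.
Qed.

Lemma dspan_scl p r v : dspan p v -> dspan p (scl r v).
Proof.
move=> pv d; rewrite ffunE; have [v0 | /pv //] := eqVneq (v d) 0.
by rewrite v0 mulr0 eqxx.
Qed.

Lemma dspan_basis_vec p e : p e -> dspan p (basis_vec e).
Proof. by move=> pe d; rewrite ffunE; have [-> // | _] := eqVneq d e; rewrite eqxx. Qed.

Lemma dspan_dact p d0 v : (forall d, p d -> p (comp d0 d)) ->
  dspan p v -> dspan p (dact delta d0 v).
Proof.
move=> p_ideal pv d'; rewrite ffunE => /exists_nz_summand[d /eqP<- nz].
by apply/p_ideal/pv; apply: contraNneq nz => ->; rewrite mulr0.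
Qed.

Lemma dspan_basis_sum p v : dspan p v -> v = \sum_(d <- enum p) scl (v d) (basis_vec d).
Proof.
move=> pv; apply/ffunP => d'; rewrite sum_ffunE big_enum /=.
under eq_bigr do rewrite !ffunE.
have [pd' | npd'] := boolP (p d').
  rewrite (bigD1 d') //= eqxx mulr1 big1 ?addr0 // => d /andP[_ dd'].
  by rewrite eq_sym (negbTE dd') mulr0.
rewrite big1 => [|d pd]; last first.
  have [dd' | _] := eqVneq d d'; rewrite ?mulr0 //.
  by move: pd; rewrite dd' unfold_in (negbTE npd').
by apply/eqP; apply: contraNT npd' => /pv.
Qed.

Lemma dact_basis_vec d e c :
  dact delta d (scl c (basis_vec e)) = scl (c * delta ^+ nmid d e) (basis_vec (comp d e)).
Proof.
apply/ffunP => d'; rewrite [LHS]ffunE [RHS]ffunE ffunE; under eq_bigr do rewrite !ffunE.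
rewrite big_mkcond (bigD1 e) //= big1 => [|d2 d2e]; last by rewrite (negbTE d2e) !mulr0 if_same.
by rewrite eqxx mulr1 addr0 eq_sym; case: ifP; rewrite ?mulr0 // mulr1 mulrC.
Qed.

Lemma dact_basis_right_unit d e c : right_unit d e ->
  dact delta d (scl c (basis_vec e)) = scl c (basis_vec d).
Proof. by case/andP=> /eqP de /eqP de0; rewrite dact_basis_vec de de0 mulr1. Qed.

Lemma triv_tensor_vanishes_quot (N L : Pn -> Prop) :
  L 0 -> triv_tensor_vanishes delta N (fun v => v = 0) -> triv_tensor_vanishes delta N L.
Proof.
move=> L0 vanish m /vanish[s [sN [j [-> ->]]]].
by exists s; split=> //; exists 0.
Qed.

Lemma triv_tensor_vanishes_right_units p :
  (forall d, p d -> eps R d = 0 /\ exists2 e, p e & right_unit d e) ->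
  triv_tensor_vanishes delta (dspan p) (fun v => v = 0).
Proof.
move=> units m pm.
pose g d := odflt d [pick e | p e && right_unit d e].
have g_spec d : p d -> [/\ eps R d = 0, p (g d) & right_unit d (g d)].
  case/units=> eps0 [e pe de]; rewrite /g; case: pickP => [e' /andP[] // | none].
  by move: (none e); rewrite pe de.
exists [seq (d, scl (m d) (basis_vec (g d))) | d <- enum p]; split.
  move=> x /mapP[d]; rewrite mem_enum => /g_spec[_ pgd _] -> /=.
  by apply: dspan_scl; apply: dspan_basis_vec.
exists 0; split=> //; rewrite addr0 big_map {1}(dspan_basis_sum pm); apply: eq_big_seq => d.
by rewrite mem_enum => /g_spec[eps0 _ unit]; rewrite dact_basis_right_unit // eps0 scl0 subr0.
Qed.

Lemma big_fiber_comp (f h : diagram n -> diagram n) (F : diagram n -> R) d' :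
  \sum_(d | f d == d') \sum_(d2 | h d2 == d) F d2 = \sum_(d2 | f (h d2) == d') F d2.
Proof.
rewrite [RHS](partition_big h (fun d => f d == d')) //.
apply: eq_bigr => d /eqP fd; apply: eq_bigl => d2.
by apply/idP/andP => [/eqP hd2 | [] //]; rewrite hd2 fd.
Qed.

Lemma mulr_sum_fiber (h : diagram n -> diagram n) (c F : diagram n -> R) d :
  c d * \sum_(d2 | h d2 == d) F d2 = \sum_(d2 | h d2 == d) c (h d2) * F d2.
Proof. by rewrite mulr_sumr; apply: eq_bigr => d2 /eqP->. Qed.

Section Retraction.
Variables (p q : pred (diagram n)) (g : diagram n -> diagram n).
Hypothesis comp_g : forall d0 d, comp d0 (g d) = g (comp d0 d).
Hypothesis nmid_g : forall d0 d, nmid d0 (g d) = nmid d0 d.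
Hypothesis p_g : forall d, p (g d).
Hypothesis g_id : forall d, p d -> g d = d.
Hypothesis q_g : forall d, q d -> q (g d).
Hypothesis q_ideal : forall d0 d, q d -> q (comp d0 d).

(* For [g d = comp d e] with [nmid d e = 0], [push] is right multiplication by [e]. *)
Definition push v : Pn := [ffun d' => \sum_(d | g d == d') v d].

Lemma push0 : push 0 = 0.
Proof. by apply/ffunP => d'; rewrite !ffunE big1 // => d _; rewrite ffunE. Qed.

Lemma pushB u v : push (u - v) = push u - push v.
Proof. by apply/ffunP => d'; rewrite !ffunE -sumrB; apply: eq_bigr => d _; rewrite !ffunE. Qed.

Lemma pushD u v : push (u + v) = push u + push v.
Proof. by apply/ffunP => d'; rewrite !ffunE -big_split; apply: eq_bigr => d _; rewrite !ffunE. Qed.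

Lemma push_scl r v : push (scl r v) = scl r (push v).
Proof. by apply/ffunP => d'; rewrite !ffunE mulr_sumr; apply: eq_bigr => d _; rewrite ffunE. Qed.

Lemma push_dact d0 v : push (dact delta d0 v) = dact delta d0 (push v).
Proof.
apply/ffunP => d'; rewrite !ffunE.
under eq_bigr do rewrite ffunE; rewrite big_fiber_comp.
transitivity (\sum_(d3 | comp d0 d3 == d') \sum_(d2 | g d2 == d3) delta ^+ nmid d0 (g d2) * v d2).
  by rewrite big_fiber_comp; apply: eq_big => [d2 | d2 _]; rewrite (comp_g, nmid_g).
apply: eq_bigr => d3 _; rewrite ffunE.
by symmetry; apply: (mulr_sum_fiber g (fun d => delta ^+ nmid d0 d)).
Qed.

Lemma push_idem v : push (push v) = push v.
Proof.
apply/ffunP => d'; rewrite !ffunE; under eq_bigr do rewrite ffunE.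
by rewrite big_fiber_comp; apply: eq_bigl => d; rewrite g_id.
Qed.

Lemma dspan_push v : dspan p (push v).
Proof. by move=> d'; rewrite ffunE => /exists_nz_summand[d /eqP<- _]. Qed.

Lemma dspan_push_ideal v : dspan q v -> dspan q (push v).
Proof. by move=> qv d'; rewrite ffunE => /exists_nz_summand[d /eqP<- /qv/q_g]. Qed.

Lemma push_id v : dspan p v -> push v = v.
Proof.
move=> pv; apply/ffunP => d'; rewrite ffunE.
have off_fiber d : g d == d' -> d != d' -> v d = 0.
  by move=> /eqP gd dd'; apply/eqP; apply: contraNT dd' => /pv/g_id <-; rewrite gd.
have [vd' | /pv/g_id gd'] := eqVneq (v d') 0.
  by rewrite vd' big1 // => d gd; have [-> // | ] := eqVneq d d'; apply: off_fiber.
rewrite (bigD1 d') ?gd' //= big1 ?addr0 // => d /andP[gd dd']; exact: off_fiber.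
Qed.

Lemma quot_direct_summand_retraction : quot_direct_summand delta (dspan p) (dspan q).
Proof.
exists (fun v => dspan q (push v)); split; [split; [|split; [|split]] | split; [|split]].
- by rewrite push0; apply: dspan0.
- by move=> u v qu qv; rewrite pushD; apply: dspanD.
- by move=> r v qv; rewrite push_scl; apply: dspan_scl.
- by move=> d v qv; rewrite push_dact; apply: dspan_dact qv; apply: q_ideal.
- exact: dspan_push_ideal.
- move=> v; exists (push v), (v - push v); split; first exact: dspan_push.
  by rewrite pushB push_idem subrr addrC subrK; split=> //; apply: dspan0.
- by move=> v pv; rewrite push_id.
Qed.

End Retraction.

End Algebra.

Section SubmodulesOfPn.
Variables (n : nat) (R : comPzRingType) (delta : R).
Local Open Scope ring_scope.

Lemma triv_tensor_vanishes_pA (x : 'I_n) : (1 < n)%N ->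
  triv_tensor_vanishes delta (dspan (pA x)) (fun v => v = 0).
Proof.
move=> n_gt1; have /card_gt0P[y] : (0 < #|[set~ x]|)%N.
  by rewrite cardsC1 card_ord -subn1 subn_gt0.
rewrite !inE eq_sym => xy; apply: triv_tensor_vanishes_right_units => d dx.
split; first exact: (eps_pA R dx).
by exists (detach x y); [apply: pA_detach | apply: right_unit_detach].
Qed.

Lemma triv_tensor_vanishes_pB (X : {set 'I_n}) (x : 'I_n) :
  triv_tensor_vanishes delta (dspan (pB X x)) (fun v => v = 0).
Proof.
apply: triv_tensor_vanishes_right_units => d /exists_inP[y yX /andP[yx xy]].
split; first by apply: (eps_same_block_right R _ xy); rewrite eq_sym.
exists (merge [set x; y]); last exact/right_unit_merge/pM_set2.
by apply/exists_inP; exists y; rewrite // yx same_block_merge set21 set22 orbT.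
Qed.

Lemma triv_tensor_vanishes_pM (Y : {set 'I_n}) : (1 < #|Y|)%N ->
  triv_tensor_vanishes delta (dspan (pM Y)) (fun v => v = 0).
Proof.
move=> /card_gt1P[y [z [yY zY yz]]]; apply: triv_tensor_vanishes_right_units => d dY.
split; last by exists (merge Y); [apply: pM_merge | apply: right_unit_merge].
by apply: (eps_same_block_right R yz); move/forall_inP: dY => /(_ y yY)/forall_inP; apply.
Qed.

Lemma quot_direct_summand_pM (X Y : {set 'I_n}) :
  quot_direct_summand delta (dspan (pM Y)) (dspan (pJ (X :\: Y))).
Proof.
have XY_Y : [disjoint X :\: Y & Y] by move: (subxx (X :\: Y)); rewrite subsetD => /andP[].
apply: (@quot_direct_summand_retraction _ _ delta _ _ (fun d => comp d (merge Y))).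
- by move=> d0 d; rewrite comp_comp_merge.
- exact: nmid_comp_merge.
- exact: pM_comp_merge.
- exact: comp_merge_id.
- by move=> d; apply: pJ_comp_merge.
- exact: pJ_comp.
Qed.

End SubmodulesOfPn.

Theorem lemma4p5 (R : comPzRingType) (delta : R) (n : nat) :
  (* (1) *)
  (forall (X : {set 'I_n}) (x : 'I_n), x \in X -> 2 <= n ->
     triv_tensor_vanishes delta
       (dspan (pA x))
       (dspan (fun d => pA x d && pJ (X :\ x) d))) /\
  (* (2) *)
  (forall (X : {set 'I_n}) (x : 'I_n), x \in X ->
     triv_tensor_vanishes delta
       (dspan (pB X x))
       (dspan (fun d => pB X x d && pJ (X :\ x) d))) /\
  (* (3) *)
  (forall (X Y : {set 'I_n}), Y \subset X -> 2 <= #|Y| ->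
     triv_tensor_vanishes delta
       (dspan (pM Y))
       (dspan (fun d => pM Y d && pJ (X :\: Y) d)) /\
     quot_direct_summand delta
       (dspan (pM Y))
       (dspan (pJ (X :\: Y)))).
Proof.
split; [|split].
- move=> X x _ n_gt1; apply: triv_tensor_vanishes_quot (dspan0 _) _.
  exact: triv_tensor_vanishes_pA.
- move=> X x _; apply: triv_tensor_vanishes_quot (dspan0 _) _.
  exact: triv_tensor_vanishes_pB.
- move=> X Y _ Y_gt1; split; last exact: quot_direct_summand_pM.
  apply: triv_tensor_vanishes_quot (dspan0 _) _.
  exact: triv_tensor_vanishes_pM.
Qed.
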